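(* Let $\phi(w)=aw+ib$ with $a>0$ and $b\in\mathbb{R}$. Then $C_\phi$ is an invertible operator on $H^2(\mathbb{C}_{+})$, and the following are equivalent: (1) $C_{\phi}$ is expansive on $H^2(\mathbb{C}_{+})$; (2) $C_{\phi}$ is uniformly expansive on $H^2(\mathbb{C}_{+})$; (3) $\phi$ is of hyperbolic type, i.e. $a\neq 1$.
   Context: $\mathbb{C}_{+}=\{w\in\mathbb{C}:\mathrm{Re}(w)>0\}$. $H^2(\mathbb{C}_{+})$ is the Hardy space of holomorphic $f$ on $\mathbb{C}_{+}$ with finite norm $\|f\|_2^2=\sup_{0<x<\infty}\frac{1}{\pi}\int_{-\infty}^{\infty}|f(x+iy)|^2\,dy$, and $C_\phi f=f\circ\phi$. For an invertible operator $T$ on a Banach space $X$ with unit sphere $S_X$: $T$ is expansive if for every $z\in S_X$ there is $n\in\mathbb{Z}$ with $\|T^nz\|\ge2$; $T$ is uniformly expansive if there exists $n\in\mathbb{N}$ such that for every $z\in S_X$, $\|T^nz\|\ge 2$ or $\|T^{-n}z\|\ge2$. *)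

From HB Require Import structures.
From mathcomp Require Import all_boot all_order all_algebra.
From mathcomp Require Import all_classical all_reals all_analysis.
From mathcomp.real_closed Require Import complex.
Set Implicit Arguments. Unset Strict Implicit. Unset Printing Implicit Defensive.
Import Order.TTheory GRing.Theory Num.Theory.
Local Open Scope ring_scope.
Local Open Scope classical_set_scope.

Section H2.
Variable R : realType.

Definition cabs (z : R[i]) : R := let: Complex x y := z in Num.sqrt (x ^+ 2 + y ^+ 2).

Definition holo_rhp (f : R[i] -> R[i]) : Prop :=
  forall w : R[i], 0 < complex.Re w ->
    exists L : R[i], forall eps : R, 0 < eps ->
      exists delta : R, 0 < delta /\
        forall h : R[i], h != 0 -> cabs h < delta ->
          cabs ((f (w + h) - f w) / h - L) < eps.

Definition H2norm2 (f : R[i] -> R[i]) : \bar R :=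
  ereal_sup [set (((pi : R)^-1)%:E *
                 \int[lebesgue_measure]_(y in [set: R])
                     ((cabs (f (Complex x y))) ^+ 2)%:E)%E
            | x in [set x : R | 0 < x]].

Definition H2 : set (R[i] -> R[i]) :=
  [set f | holo_rhp f /\ (H2norm2 f < +oo)%E].

Definition H2norm (f : R[i] -> R[i]) : R := Num.sqrt (fine (H2norm2 f)).

Definition Cop (phi : R[i] -> R[i]) (f : R[i] -> R[i]) : R[i] -> R[i] :=
  f \o phi.
End H2.

Section Ops.
Variables (A : Type) (K : pzRingType) (F : numDomainType).
Local Notation U := (A -> K).
Variables (X : set U) (N : U -> F).

Definition maps_into (T : U -> U) := forall f, X f -> X (T f).

Definition linear_on (T : U -> U) :=
  forall (c : K) f g, X f -> X g ->
    T (fun w => c * f w + g w) = (fun w => c * T f w + T g w).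

Definition bounded_on (T : U -> U) :=
  exists M : F, forall f, X f -> N (T f) <= M * N f.

Definition inverse_on (T S : U -> U) :=
  maps_into S /\ forall f, X f -> S (T f) = f /\ T (S f) = f.

Definition invertible_op (T : U -> U) :=
  [/\ maps_into T, linear_on T, bounded_on T &
      exists S, [/\ inverse_on T S, linear_on S & bounded_on S]].

Definition zpow (T S : U -> U) (n : int) : U -> U :=
  match n with
  | Posz k => iter k T
  | Negz k => iter k.+1 S
  end.

(* expansive: for every z in the unit sphere, some n in Z with ||T^n z|| >= 2
   (T^{-1} is the inverse of T on X, which is unique on X) *)
Definition expansive (T : U -> U) :=
  forall S, inverse_on T S ->
    forall z, X z -> N z = 1 -> exists n : int, 2 <= N (zpow T S n z).

Definition uniformly_expansive (T : U -> U) :=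
  forall S, inverse_on T S ->
    exists n : nat, forall z, X z -> N z = 1 ->
      2 <= N (iter n T z) \/ 2 <= N (iter n S z).
End Ops.

From HB Require Import structures.
From mathcomp Require Import all_boot all_order all_algebra.
From mathcomp Require Import all_classical all_reals all_analysis.
From mathcomp.real_closed Require Import complex.
From mathcomp Require Import ring lra measurable_realfun.
Import Order.TTheory GRing.Theory Num.Theory.
Import numFieldNormedType.Exports.
Set Implicit Arguments. Unset Strict Implicit. Unset Printing Implicit Defensive.
Local Open Scope ring_scope.

(* For phi w = a w + i b, the substitution y |-> a y + b shows that the
   integral of |f o phi|^2 along the line Re w = x is a^-1 times the integral
   of |f|^2 along Re w = a x; as x |-> a x permutes (0, +oo), this gives
   ||C_phi f|| = a^(-1/2) ||f||.  So C_phi and its inverse C_(phi^-1) rescale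
   every norm by a^(-1/2) and a^(1/2).  When a <> 1 one of these factors
   exceeds 1, and a single power of it exceeds 2 on the whole unit sphere;
   when a = 1 both operators are isometries and the unit vector 1/(w+1) is
   never expanded. *)

Section ComplexModulus.
Variable R : realType.
Local Open Scope complex_scope.
Implicit Types z w : R[i].

Lemma cabs_ge0 z : 0 <= cabs z.
Proof. by case: z => x y; rewrite /cabs sqrtr_ge0. Qed.

Lemma cabs0 : cabs (0 : R[i]) = 0.
Proof. exact: Normc.normc0. Qed.

Lemma cabs_gt0 z : (0 < cabs z) = (z != 0).
Proof.
rewrite lt_def cabs_ge0 andbT; apply/idP/idP; apply: contra => /eqP.
  by move=> ->; rewrite cabs0.
by move/Normc.eq0_normc ->.
Qed.

Lemma cabsM z w : cabs (z * w) = cabs z * cabs w.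
Proof. exact: Normc.normcM. Qed.

Lemma cabsV z : cabs z^-1 = (cabs z)^-1.
Proof. exact: Normc.normcV. Qed.

Lemma cabsD z w : cabs (z + w) <= cabs z + cabs w.
Proof. exact: le_normcD. Qed.

Lemma cabsN z : cabs (- z) = cabs z.
Proof. exact: normcN. Qed.

Lemma cabs_distB z w : `|cabs z - cabs w| <= cabs (z - w).
Proof.
have triangle (u v : R[i]) : cabs u - cabs v <= cabs (u - v).
  by rewrite lerBlDr -[X in cabs X <= _](subrK v); exact: cabsD (u - v) v.
by rewrite ler_norml triangle andbT lerNl opprB -[cabs (z - w)]cabsN opprB.
Qed.

Lemma cabs_Complex2 (x y : R) : cabs (Complex x y) ^+ 2 = x ^+ 2 + y ^+ 2.
Proof. by rewrite /cabs sqr_sqrtr // addr_ge0 // sqr_ge0. Qed.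

Lemma cabs_real (r : R) : cabs r%:C = `|r|.
Proof. by rewrite /cabs /= expr0n /= addr0 sqrtr_sqr. Qed.

Lemma cabs_imaginary (r : R) : cabs (Complex 0 r) = `|r|.
Proof. by rewrite /cabs expr0n /= add0r sqrtr_sqr. Qed.

Lemma normr_Re_le_cabs z : `|complex.Re z| <= cabs z.
Proof.
case: z => x y /=; rewrite -(sqrtr_sqr x) ler_sqrt ?addr_ge0 ?sqr_ge0 //.
by rewrite lerDl sqr_ge0.
Qed.

Lemma ReD z w : complex.Re (z + w) = complex.Re z + complex.Re w.
Proof. by case: z; case: w. Qed.

Lemma Re_le_cabs z : complex.Re z <= cabs z.
Proof. exact: le_trans (ler_norm _) (normr_Re_le_cabs z). Qed.

End ComplexModulus.

Section Holomorphy.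
Variable R : realType.
Local Open Scope complex_scope.
Implicit Types (f : R[i] -> R[i]) (w : R[i]).

Lemma holo_rhp_cont f w : holo_rhp f -> 0 < complex.Re w ->
  forall eps, 0 < eps -> exists2 delta, 0 < delta &
    forall h, cabs h < delta -> cabs (f (w + h) - f w) < eps.
Proof.
move=> hf hw eps eps0; have [L HL] := hf w hw.
have [d [d0 Hd]] := HL 1 ltr01.
have L1 : 0 < cabs L + 1 by rewrite ltr_wpDl // cabs_ge0.
exists (Num.min d (eps / (cabs L + 1))); first by rewrite lt_min d0 divr_gt0.
move=> h; rewrite lt_min => /andP[hd heps].
have [->|h0] := eqVneq h 0; first by rewrite addr0 subrr cabs0.
set q := (f (w + h) - f w) / h.
have -> : f (w + h) - f w = q * h by rewrite /q divfK.
have qL : cabs q <= cabs L + 1.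
  rewrite -(subrK L q) addrC; apply: (le_trans (cabsD _ _)).
  by rewrite lerD2l ltW // Hd.
rewrite cabsM; apply: (le_lt_trans (ler_wpM2r (cabs_ge0 h) qL)).
by rewrite mulrC -ltr_pdivlMr.
Qed.

Lemma continuous_cabs_slice f (c : R) : holo_rhp f -> 0 < c ->
  continuous (fun y : R => cabs (f (Complex c y))).
Proof.
move=> hf c0 y0; apply/cvgrPdist_lt => e e0.
have [d d0 Hd] := holo_rhp_cont hf (c0 : 0 < complex.Re (Complex c y0)) e0.
apply/nbhs_ballP; exists d => // y /= hy.
have -> : Complex c y = Complex c y0 + Complex 0 (y - y0).
  by apply/eqP; rewrite eq_complex /= addr0 addrC subrK !eqxx.
apply: le_lt_trans (cabs_distB _ _) _; rewrite -cabsN opprB.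
by apply: Hd; rewrite cabs_imaginary distrC.
Qed.

Definition affine_rhp (a b : R) w : R[i] := a%:C * w + Complex 0 b.

Lemma affine_rhpE (a b x y : R) :
  affine_rhp a b (Complex x y) = Complex (a * x) (a * y + b).
Proof. by apply/eqP; rewrite eq_complex /= !mul0r subr0 !addr0 !eqxx. Qed.

Lemma affine_rhpK (a b : R) : a != 0 ->
  cancel (affine_rhp a b) (affine_rhp a^-1 (- (b / a))).
Proof. by move=> a0 [x y]; rewrite !affine_rhpE; congr Complex; field. Qed.

Lemma affine_rhpKV (a b : R) : a != 0 ->
  cancel (affine_rhp a^-1 (- (b / a))) (affine_rhp a b).
Proof. by move=> a0 [x y]; rewrite !affine_rhpE; congr Complex; field. Qed.

Lemma holo_rhp_comp_affine f (a b : R) : 0 < a -> holo_rhp f ->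
  holo_rhp (f \o affine_rhp a b).
Proof.
move=> a0 hf [x y] /= x0.
have Re0 : 0 < complex.Re (affine_rhp a b (Complex x y)).
  by rewrite affine_rhpE mulr_gt0.
have [L HL] := hf _ Re0.
exists (a%:C * L) => eps eps0.
have [d [d0 Hd]] := HL (eps / a) (divr_gt0 eps0 a0).
exists (d / a); split; first exact: divr_gt0.
move=> h h0 hd.
have a0C : a%:C != 0 by rewrite eq_complex /= eqxx andbT gt_eqF.
have ah0 : a%:C * h != 0 by rewrite mulf_neq0.
have ahd : cabs (a%:C * h) < d.
  by rewrite cabsM cabs_real gtr0_norm // mulrC -ltr_pdivlMr.
have := Hd _ ah0 ahd.
rewrite /= /affine_rhp mulrDr addrAC -/(affine_rhp a b _).
set D := f _ - f _ => HD.
have -> : D / h - a%:C * L = a%:C * (D / (a%:C * h) - L).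
  by field; rewrite h0.
by rewrite cabsM cabs_real gtr0_norm // mulrC -ltr_pdivlMr.
Qed.

Definition inv_add1 w : R[i] := (w + 1)^-1.

Lemma holo_rhp_inv_add1 : holo_rhp inv_add1.
Proof.
move=> w w0; exists (- (w + 1) ^- 2) => eps eps0.
exists (Num.min (1/2) (eps / 2)); split; first by rewrite lt_min !divr_gt0.
move=> h h0; rewrite lt_min => /andP[h1 h2].
have := normr_Re_le_cabs h; rewrite ler_norml => /andP[Re_h _].
have Re_w1 : 1 <= complex.Re (w + 1) by rewrite ReD /= lerDr ltW.
have Re_wh1 : 1/2 < complex.Re (w + h + 1) by rewrite !ReD /=; lra.
have cabs_w1 := le_trans Re_w1 (Re_le_cabs _).
have cabs_wh1 := lt_le_trans Re_wh1 (Re_le_cabs _).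
have w1 : w + 1 != 0 by rewrite -cabs_gt0 (lt_le_trans ltr01).
have wh1 : w + h + 1 != 0 by rewrite -cabs_gt0 (lt_trans _ cabs_wh1).
have -> : (inv_add1 (w + h) - inv_add1 w) / h - - (w + 1) ^- 2
    = h * ((w + 1) * (w + 1))^-1 * (w + h + 1)^-1.
  by rewrite /inv_add1; field; rewrite h0 w1 wh1.
rewrite !cabsM !cabsV cabsM.
have B1 : (cabs (w + 1) * cabs (w + 1))^-1 <= 1.
  by rewrite invf_le1 ?mulr_ege1 // mulr_gt0 // (lt_le_trans ltr01).
have B2 : (cabs (w + h + 1))^-1 < 2.
  by rewrite invf_plt ?posrE //; [lra | apply: lt_trans cabs_wh1].
have B0 : 0 <= (cabs (w + 1) * cabs (w + 1))^-1.
  by rewrite invr_ge0 mulr_ge0 ?cabs_ge0.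
have C0 : 0 <= (cabs (w + h + 1))^-1 by rewrite invr_ge0 cabs_ge0.
apply: (@le_lt_trans _ _ (cabs h * 2)); last lra.
rewrite -mulrA ler_wpM2l ?cabs_ge0 // -[2]mul1r.
by apply: ler_pM => //; exact: ltW.
Qed.
End Holomorphy.

Arguments inv_add1 {R}.

Section IntegralsOnTheLine.
Variable R : realType.
Local Notation mu := (@lebesgue_measure R).
Local Open Scope ereal_scope.

Lemma ge0_integral_comp_affine (G : R -> R) (a b : R) :
  (0 < a)%R -> continuous G -> (forall x, 0 <= G x)%R ->
  \int[mu]_(y in [set: R]) (G (a * y + b)%R)%:E =
    (a^-1)%:E * \int[mu]_(y in [set: R]) (G y)%:E.
Proof.
move=> a0 cG G0; set F := (fun y : R => a * y + b)%R.
have F'E : derive1 F = cst a.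
  apply/funext => y; rewrite derive1E; apply: derive_val.
  by apply: is_derive_eq; rewrite addr0 /GRing.scale /= mulr1.
have -> : \int[mu]_(y in [set: R]) (G y)%:E =
    \int[mu]_(y in [set: R]) (((G \o F) * derive1 F) y)%:E.
  apply: increasing_ge0_integration_by_substitutionT => //; rewrite ?F'E.
  - by move=> x y xy; rewrite /F ltrD2r ltr_pM2l.
  - exact: cst_continuous.
  - exact: is_cvg_cst.
  - exact: is_cvg_cst.
  - apply/cvgrNyPle => A; exists ((A - b) / a)%R; split; first by rewrite num_real.
    by move=> x hx; rewrite /F -lerBrDr -ler_pdivlMl // mulrC ltW.
  - apply/cvgryPge => A; exists ((A - b) / a)%R; split; first by rewrite num_real.
    by move=> x hx; rewrite /F -lerBlDr -ler_pdivrMl // mulrC ltW.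
have -> : \int[mu]_(y in [set: R]) (((G \o F) * derive1 F) y)%:E =
    \int[mu]_(y in [set: R]) (a%:E * (G (a * y + b)%R)%:E).
  by apply: eq_integral => y _; rewrite F'E -EFinM mulrC.
rewrite ge0_integralZl_EFin //; first last.
- exact: ltW.
- apply: measurableT_comp => //; apply: measurableT_comp.
    exact: continuous_measurable_fun.
  by apply: measurable_funD => //; apply: measurable_funM.
- by move=> x _; rewrite lee_fin.
by rewrite muleA -EFinM mulVf ?gt_eqF // mul1e.
Qed.

Lemma integralT_oneDsqrV :
  \int[mu]_(y in [set: R]) ((oneDsqr y)^-1)%:E = pi%:E.
Proof.
rewrite (@ge0_symfun_integralT _ (fun x : R => (oneDsqr x)^-1)%R).
- rewrite -set_itvcy integral0y_oneDsqr -EFinM; congr (_%:E).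
  by rewrite mulrC divfK // pnatr_eq0.
- by move=> x; rewrite invr_ge0 (le_trans ler01) // oneDsqr_ge1.
- exact: continuous_oneDsqrV.
- by move=> x /=; rewrite /oneDsqr sqrrN.
Qed.

Lemma integralT_inv_sqrD (c : R) : (0 < c)%R ->
  \int[mu]_(y in [set: R]) ((c ^+ 2 + y ^+ 2)^-1)%:E = (pi / c)%:E.
Proof.
move=> c0.
(* The [+ 0] matches the shape [G (a * y + b)] of [ge0_integral_comp_affine]. *)
have scale y : ((c ^+ 2 + y ^+ 2)^-1 = (c ^+ 2)^-1 * (oneDsqr (c^-1 * y + 0))^-1)%R.
  have : (oneDsqr (c^-1 * y + 0) != 0)%R.
    by rewrite gt_eqF // (lt_le_trans ltr01) // oneDsqr_ge1.
  rewrite /oneDsqr => h; field.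
  by rewrite gt_eqF //= gt_eqF // ltr_wpDr ?sqr_ge0 ?exprn_gt0.
have -> : \int[mu]_(y in [set: R]) ((c ^+ 2 + y ^+ 2)^-1)%:E =
    \int[mu]_(y in [set: R]) (((c ^+ 2)^-1)%:E * ((oneDsqr (c^-1 * y + 0))^-1)%:E).
  by apply: eq_integral => y _; rewrite scale EFinM.
rewrite ge0_integralZl_EFin //; first last.
- by rewrite invr_ge0 sqr_ge0.
- apply: measurableT_comp => //.
  apply: (measurableT_comp (f := fun x : R => (oneDsqr x)^-1%R)
                           (g := fun y : R => (c^-1 * y + 0)%R)).
    by apply: continuous_measurable_fun; exact: continuous_oneDsqrV.
  by apply: measurable_funD => //; apply: measurable_funM.
rewrite (@ge0_integral_comp_affine (fun x => (oneDsqr x)^-1)%R) ?invr_gt0 //;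
  last exact: continuous_oneDsqrV.
rewrite integralT_oneDsqrV invrK -!EFinM; congr (_%:E).
by field; rewrite gt_eqF.
Qed.

End IntegralsOnTheLine.

Section HardyNorm.
Variable R : realType.
Local Notation mu := (@lebesgue_measure R).
Local Open Scope complex_scope.
Implicit Types f : R[i] -> R[i].

Definition slice_integral f (x : R) : \bar R :=
  \int[mu]_(y in [set: R]) ((cabs (f (Complex x y))) ^+ 2)%:E.

Lemma H2norm2E f : H2norm2 f =
  ereal_sup [set ((pi^-1)%:E * slice_integral f x)%E | x in [set x : R | 0 < x]].
Proof. by []. Qed.

Lemma H2norm2_ge0 f : (0 <= H2norm2 f)%E.
Proof.
rewrite H2norm2E; apply: le_trans (ereal_sup_ubound _); last by exists 1; rewrite //= ltr01.
apply: mule_ge0; first by rewrite lee_fin invr_ge0 pi_ge0.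
by apply: integral_ge0 => y _; rewrite lee_fin sqr_ge0.
Qed.

Lemma slice_integral_comp_affine f (a b x : R) : 0 < a -> holo_rhp f -> 0 < x ->
  slice_integral (f \o affine_rhp a b) x = ((a^-1)%:E * slice_integral f (a * x))%E.
Proof.
move=> a0 hf x0; rewrite /slice_integral.
under eq_integral do rewrite /= affine_rhpE.
apply: (@ge0_integral_comp_affine _ (fun y => cabs (f (Complex (a * x) y)) ^+ 2)).
- exact.
- have ax0 : 0 < a * x by rewrite mulr_gt0.
  have cabs_cont := continuous_cabs_slice hf ax0.
  exact: (fun y => continuous_comp (cabs_cont y) (@exprn_continuous R 2 _)).
- by move=> y; rewrite sqr_ge0.
Qed.

Lemma H2norm2_comp_affine f (a b : R) : 0 < a -> holo_rhp f ->
  H2norm2 (f \o affine_rhp a b) = ((a^-1)%:E * H2norm2 f)%E.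
Proof.
move=> a0 hf; rewrite !H2norm2E -ereal_sup_pZl ?invr_gt0 //; congr ereal_sup.
apply/seteqP; split => e /=.
  move=> [x x0 <-]; exists ((pi^-1)%:E * slice_integral f (a * x))%E.
    by exists (a * x) => //; rewrite /= mulr_gt0.
  by rewrite slice_integral_comp_affine // muleCA.
move=> [_ [x x0 <-] <-]; exists (x / a); first by rewrite /= divr_gt0.
by rewrite slice_integral_comp_affine ?divr_gt0 // muleCA mulrC divfK ?gt_eqF.
Qed.

Lemma H2_comp_affine f (a b : R) : 0 < a -> H2 f ->
  H2 (f \o affine_rhp a b) /\
  H2norm (f \o affine_rhp a b) = Num.sqrt a^-1 * H2norm f.
Proof.
move=> a0 [hf fin].
have normE : H2norm2 (f \o affine_rhp a b) = (a^-1 * fine (H2norm2 f))%:E.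
  by rewrite H2norm2_comp_affine // EFinM fineK // ge0_fin_numE ?H2norm2_ge0.
split; first by split; [exact: holo_rhp_comp_affine | rewrite normE ltry].
by rewrite /H2norm normE /= sqrtrM // invr_ge0 ltW.
Qed.

Lemma slice_integral_inv_add1 (x : R) : 0 < x ->
  slice_integral inv_add1 x = (pi / (x + 1))%:E.
Proof.
move=> x0; rewrite /slice_integral -integralT_inv_sqrD ?ltr_wpDl ?ltW //.
apply: eq_integral => y _; congr (_%:E); rewrite /inv_add1.
have -> : Complex x y + 1 = Complex (x + 1) y.
  by apply/eqP; rewrite eq_complex /= addr0 !eqxx.
by rewrite cabsV exprVn cabs_Complex2.
Qed.

Lemma H2norm2_inv_add1 : H2norm2 (@inv_add1 R) = 1%E.
Proof.
have E (x : R) : 0 < x -> ((pi^-1)%:E * slice_integral inv_add1 x)%E = ((x + 1)^-1)%:E.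
  move=> x0; rewrite slice_integral_inv_add1 // -EFinM mulrA mulVf ?mul1r //.
  by rewrite gt_eqF // pi_gt0.
apply/eqP; rewrite eq_le; apply/andP; split.
  apply: ge_ereal_sup => _ [x x0 <-]; rewrite E // lee_fin invf_le1 ?ltr_wpDl ?ltW //.
  by rewrite ltrDr.
apply/lee_addgt0Pr => e e0.
have e1 : 0 < e + 1 by rewrite ltr_wpDr ?ltW.
apply: (le_trans _ (leeD2r _ (ereal_sup_ubound (ex_intro2 _ _ e e0 (E e e0))))).
rewrite -EFinD lee_fin -(@ler_pM2r _ (e + 1)) // mulrDl mulVf ?gt_eqF // mul1r.
nra.
Qed.

Lemma H2_inv_add1 : H2 (@inv_add1 R) /\ H2norm (@inv_add1 R) = 1.
Proof.
split; first by split; [exact: holo_rhp_inv_add1 | rewrite H2norm2_inv_add1 ltry].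
by rewrite /H2norm H2norm2_inv_add1 /= sqrtr1.
Qed.

End HardyNorm.

Section InverseOperators.
Variables (A : Type) (K : pzRingType) (F : numDomainType).
Local Notation U := (A -> K).
Variables (X : set U) (N : U -> F).
Implicit Types (T S : U -> U) (k : F).

Lemma inverse_on_eq T S S' : inverse_on X T S -> inverse_on X T S' ->
  forall f, X f -> S f = S' f.
Proof.
move=> [_ HS] [XS' HS'] f Xf.
by rewrite -{1}(HS' f Xf).2 (HS _ (XS' f Xf)).1.
Qed.

Lemma uniformly_expansive_expansive T :
  uniformly_expansive X N T -> expansive X N T.
Proof.
move=> UT S HS z Xz Nz; have [n Hn] := UT S HS.
case: (Hn z Xz Nz) => [HT|HSn]; first by exists (Posz n).
case: n HSn {Hn} => [|k] HSn; last by exists (Negz k).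
by move: HSn; rewrite /= Nz lern1.
Qed.

Definition scales_by T k := forall f, X f -> X (T f) /\ N (T f) = k * N f.

Lemma scales_by_iter T k n : scales_by T k -> scales_by (iter n T) (k ^+ n).
Proof.
move=> HT; elim: n => [|n IH] f Xf; first by rewrite expr0 mul1r.
have [X1 N1] := IH f Xf; have [X2 N2] := HT _ X1.
by rewrite iterS N2 N1 exprS mulrA.
Qed.

End InverseOperators.

Lemma exists_expr_ge2 (F : archiRealFieldType) (k : F) : 1 < k ->
  exists n, 2 <= k ^+ n.
Proof.
move=> k1; have k0 : 0 < k - 1 by rewrite subr_gt0.
have bernoulli n : 1 + n%:R * (k - 1) <= k ^+ n.
  elim: n => [|n IH]; first by rewrite mul0r addr0 expr0.
  rewrite exprS -natr1; apply: le_trans (ler_wpM2l (ltW (lt_trans ltr01 k1)) IH).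
  have := mulr_ge0 (ltW k0) (mulr_ge0 (ler0n _ n) (ltW k0)); nra.
have [m Hm] : exists m : nat, (k - 1)^-1 < m%:R.
  by exists (Num.bound (k - 1)^-1); rewrite archi_boundP // invr_ge0 ltW.
exists m; apply: le_trans (bernoulli m).
have : 1 <= m%:R * (k - 1) by rewrite -ler_pdivrMr // div1r ltW.
lra.
Qed.

Section ScaledOperators.
Variables (A : Type) (K : pzRingType) (F : archiRealFieldType).
Local Notation U := (A -> K).
Variables (X : set U) (N : U -> F) (T S : U -> U) (kT kS : F).
Hypotheses (T_scale : scales_by X N T kT) (S_scale : scales_by X N S kS)
  (S_inv : inverse_on X T S).

Lemma inverse_on_scales_by S' : inverse_on X T S' -> scales_by X N S' kS.
Proof. by move=> HS' f Xf; rewrite -(inverse_on_eq S_inv HS' Xf); exact: S_scale. Qed.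

Lemma scales_by_invertible_op : linear_on X T -> linear_on X S ->
  invertible_op X N T.
Proof.
move=> linT linS; split=> //.
- by move=> f /T_scale[].
- by exists kT => f /T_scale[_ ->].
- by exists S; split=> //; exists kS => f /S_scale[_ ->].
Qed.

Lemma scales_by_uniformly_expansive : 1 < kT \/ 1 < kS ->
  uniformly_expansive X N T.
Proof.
move=> [kT1|kS1] S' HS'.
- have [n Hn] := exists_expr_ge2 kT1; exists n => z Xz Nz; left.
  by rewrite (scales_by_iter n T_scale Xz).2 Nz mulr1.
- have [n Hn] := exists_expr_ge2 kS1; exists n => z Xz Nz; right.
  by rewrite (scales_by_iter n (inverse_on_scales_by HS') Xz).2 Nz mulr1.
Qed.

Lemma isometry_not_expansive z : kT = 1 -> kS = 1 -> X z -> N z = 1 ->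
  ~ expansive X N T.
Proof.
move=> kT1 kS1 Xz Nz /(_ S S_inv z Xz Nz)[[n|n]] /=.
- by rewrite (scales_by_iter n T_scale Xz).2 kT1 expr1n Nz mulr1 lern1.
- by rewrite (scales_by_iter n.+1 S_scale Xz).2 kS1 expr1n Nz mulr1 lern1.
Qed.

End ScaledOperators.

Unset Implicit Arguments.

Theorem theorem3p6 (R : realType) (a b : R) (ha : 0 < a) :
  let phi := fun w : R[i] => (a%:C)%C * w + (Complex 0 b) in
  let T := Cop phi in
  invertible_op (@H2 R) (@H2norm R) T /\
  ((expansive (@H2 R) (@H2norm R) T <-> uniformly_expansive (@H2 R) (@H2norm R) T) /\
   (uniformly_expansive (@H2 R) (@H2norm R) T <-> a != 1)).
Proof.
move=> phi T; pose S := Cop (affine_rhp a^-1 (- (b / a))).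
have a0 : a != 0 by rewrite gt_eqF.
have T_scale : scales_by (@H2 R) (@H2norm R) T (Num.sqrt a^-1).
  by move=> f; exact: H2_comp_affine.
have S_scale : scales_by (@H2 R) (@H2norm R) S (Num.sqrt a).
  have ai : 0 < a^-1 by rewrite invr_gt0.
  by move=> f /(H2_comp_affine (- (b / a)) ai); rewrite invrK.
have S_inv : inverse_on (@H2 R) T S.
  split=> [f /S_scale[] //|f _].
  split; apply/funext => w; rewrite /S /T /Cop /=; congr f.
    exact: affine_rhpKV.
  exact: affine_rhpK.
have [u_in u_norm] := @H2_inv_add1 R.
have expansive_a1 : expansive (@H2 R) (@H2norm R) T -> a != 1.
  apply: contraPneq => a1.
  by apply: (isometry_not_expansive T_scale S_scale S_inv _ _ u_in u_norm);
    rewrite a1 ?invr1 sqrtr1.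
have uniformly : a != 1 -> uniformly_expansive (@H2 R) (@H2norm R) T.
  move=> a1; apply: (scales_by_uniformly_expansive T_scale S_scale S_inv).
  have [a_lt1|a_gt1|/eqP] := ltgtP a 1; last by rewrite (negPf a1).
  - by left; rewrite -sqrtr1 ltr_sqrt ?invr_gt0 // invf_gt1.
  - by right; rewrite -sqrtr1 ltr_sqrt.
split; first by apply: (scales_by_invertible_op T_scale S_scale S_inv).
split; split.
- by move/expansive_a1; exact: uniformly.
- exact: uniformly_expansive_expansive.
- by move/uniformly_expansive_expansive; exact: expansive_a1.
- exact: uniformly.
Qed.
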